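(* Let $f,g\in\mathbb{R}[x_1,\dots,x_n]$ be forms, where $f$ is nonconstant with strictly positive coefficients and $g(x)>0$ for all $x\in\mathbb{R}_+^n\setminus\{0\}$. Then there exists an integer $l\ge1$ such that $f^lg$ has strictly positive coefficients.
   Context: A form is a homogeneous polynomial. A form $f=\sum_{|w|=d}a_wx^w$ of degree $d$ has strictly positive coefficients if $a_w>0$ for every $w\in\mathbb{Z}_{\ge0}^n$ with $|w|=d$. $\mathbb{R}_+^n=\{x\in\mathbb{R}^n: x_i\ge0\ \forall i\}$. *)

(* real polynomials in n variables x_1..x_n, represented
   as finite lists of terms (coefficient, exponent vector). *)
From Stdlib Require Import Reals List Arith.
Import ListNotations.
Open Scope R_scope.

Definition mono := list nat.
Definition mpoly := list (R * mono).

Definition is_poly (n : nat) (p : mpoly) : Prop :=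
  Forall (fun t => length (snd t) = n) p.

Definition deg (w : mono) : nat := fold_right Nat.add 0%nat w.

Fixpoint coef (p : mpoly) (w : mono) : R :=
  match p with
  | [] => 0
  | (c, u) :: p' =>
      if list_eq_dec Nat.eq_dec u w then c + coef p' w else coef p' w
  end.

Fixpoint vadd (u v : mono) : mono :=
  match u, v with
  | a :: u', b :: v' => (a + b)%nat :: vadd u' v'
  | _, _ => []
  end.

Definition pmul (p q : mpoly) : mpoly :=
  flat_map (fun t => map (fun s => (fst t * fst s, vadd (snd t) (snd s))) q) p.

Definition pone (n : nat) : mpoly := [(1, repeat 0%nat n)].

Fixpoint ppow (n : nat) (p : mpoly) (l : nat) : mpoly :=
  match l with
  | O => pone n
  | S l' => pmul p (ppow n p l')
  end.

Fixpoint meval (x : list R) (w : mono) : R :=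
  match x, w with
  | a :: x', k :: w' => a ^ k * meval x' w'
  | _, _ => 1
  end.

Definition peval (p : mpoly) (x : list R) : R :=
  fold_right Rplus 0 (map (fun t => fst t * meval x (snd t)) p).

Definition is_form (n d : nat) (p : mpoly) : Prop :=
  is_poly n p /\ forall w, coef p w <> 0 -> deg w = d.

Definition nonconstant (p : mpoly) : Prop :=
  exists w, coef p w <> 0 /\ deg w <> 0%nat.

Definition strictly_pos_coefs (n d : nat) (p : mpoly) : Prop :=
  forall w : mono, length w = n -> deg w = d -> 0 < coef p w.

Definition in_Rplus_nonzero (n : nat) (x : list R) : Prop :=
  length x = n /\ Forall (fun t => 0 <= t) x /\ exists t, In t x /\ t <> 0.

(* Let S = x_1 + ... + x_n; all inequalities between polynomials are coefficientwise.
   Pólya's theorem, proved from the identity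
   [coef (S^N g) b * b! = N! * sum_u g_u b^(u)] (falling powers) and a positive lower
   bound for g on the simplex, gives S^N g >= eps S^(N+e) for all large N.
   As f has positive coefficients, u = f^K >= c S^D with D = K d, and D can be taken
   that large. Write u = c S^D + v with 0 <= v <= u; then
   u^(j+1) = c S^D Q + v^(j+1) with Q = sum_i u^(j-i) v^i >= max (u^j, (j+1) v^j), so
   u^(j+1) g >= c eps Q S^(D+e) - M A v^j S^(D+e) for bounds M, A on the coefficients
   of g and u, and the first term dominates once j + 1 > 2 M A / (c eps). *)

From Stdlib Require Import Reals List Arith Lra Lia Psatz.
Import ListNotations.
Open Scope R_scope.

Definition lsum {A} (l : list A) (F : A -> R) : R :=
  fold_right (fun a acc => F a + acc) 0 l.

Lemma lsum_cons {A} a l (F : A -> R) : lsum (a :: l) F = F a + lsum l F.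
Proof. reflexivity. Qed.

Lemma lsum_app {A} (l1 l2 : list A) F : lsum (l1 ++ l2) F = lsum l1 F + lsum l2 F.
Proof. induction l1; simpl; [lra|]. unfold lsum in *; simpl. rewrite IHl1; lra. Qed.

Lemma lsum_map {A B} (g : A -> B) l F : lsum (map g l) F = lsum l (fun a => F (g a)).
Proof. induction l; simpl; auto. unfold lsum in *; simpl; rewrite IHl; auto. Qed.

Lemma lsum_flat_map {A B} (G : A -> list B) l F :
  lsum (flat_map G l) F = lsum l (fun a => lsum (G a) F).
Proof. induction l; simpl; auto. rewrite lsum_app, IHl; auto. Qed.

Lemma lsum_ext {A} (l : list A) F G :
  (forall a, In a l -> F a = G a) -> lsum l F = lsum l G.
Proof.
  induction l; intros H; simpl; auto. unfold lsum in *; simpl.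
  rewrite H by (left; auto). f_equal. apply IHl. intros; apply H; right; auto.
Qed.

Lemma lsum_plus {A} (l : list A) F G :
  lsum l (fun a => F a + G a) = lsum l F + lsum l G.
Proof.
  induction l; simpl; [unfold lsum; simpl; lra|]. unfold lsum in *; simpl. rewrite IHl; lra.
Qed.

Lemma lsum_scal {A} (l : list A) c F : lsum l (fun a => c * F a) = c * lsum l F.
Proof.
  induction l; simpl; [unfold lsum; simpl; lra|]. unfold lsum in *; simpl. rewrite IHl; lra.
Qed.

Lemma lsum_zero {A} (l : list A) : lsum l (fun _ => 0) = 0.
Proof. induction l; simpl; auto. unfold lsum in *; simpl; rewrite IHl; lra. Qed.

Lemma lsum_swap {A B} (l1 : list A) (l2 : list B) F :
  lsum l1 (fun a => lsum l2 (fun b => F a b)) = lsum l2 (fun b => lsum l1 (fun a => F a b)).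
Proof.
  induction l1.
  - simpl. rewrite lsum_zero; auto.
  - rewrite lsum_cons, IHl1, <- lsum_plus. apply lsum_ext; intros; rewrite lsum_cons; auto.
Qed.

Lemma lsum_le {A} (l : list A) F G :
  (forall a, In a l -> F a <= G a) -> lsum l F <= lsum l G.
Proof.
  induction l; intros H; simpl; [unfold lsum; simpl; lra|]. unfold lsum in *; simpl.
  assert (F a <= G a) by (apply H; left; auto).
  assert (fold_right (fun a0 acc => F a0 + acc) 0 l <= fold_right (fun a0 acc => G a0 + acc) 0 l)
    by (apply IHl; intros; apply H; right; auto).
  lra.
Qed.

Lemma lsum_nonneg {A} (l : list A) F : (forall a, In a l -> 0 <= F a) -> 0 <= lsum l F.
Proof. intros H. rewrite <- (lsum_zero l). apply lsum_le; auto. Qed.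

Lemma lsum_neq0 {A} (l : list A) F : lsum l F <> 0 -> exists a, In a l /\ F a <> 0.
Proof.
  induction l; simpl; intros H.
  - unfold lsum in H; simpl in H; lra.
  - unfold lsum in H; simpl in H. destruct (Req_dec (F a) 0).
    + destruct IHl as [x [Hx Hf]]; [unfold lsum; lra|]. exists x; auto.
    + exists a; auto.
Qed.

Lemma lsum_abs {A} (l : list A) F : Rabs (lsum l F) <= lsum l (fun a => Rabs (F a)).
Proof.
  induction l; simpl; [unfold lsum; simpl; rewrite Rabs_R0; lra|].
  unfold lsum in *; simpl. eapply Rle_trans; [apply Rabs_triang|]. lra.
Qed.

Definition delta (u w : mono) : R := if list_eq_dec Nat.eq_dec u w then 1 else 0.

Lemma delta_neq0 u w : delta u w <> 0 -> u = w.
Proof. unfold delta; destruct list_eq_dec; auto; lra. Qed.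

Lemma delta_nonneg u w : 0 <= delta u w.
Proof. unfold delta; destruct list_eq_dec; lra. Qed.

Lemma coef_as_sum p w : coef p w = lsum p (fun t => fst t * delta (snd t) w).
Proof.
  induction p as [|[c u] p IH]; simpl; auto. rewrite IH. unfold delta.
  destruct (list_eq_dec Nat.eq_dec u w); lra.
Qed.

Lemma coef_app p q w : coef (p ++ q) w = coef p w + coef q w.
Proof. rewrite !coef_as_sum, lsum_app; auto. Qed.

Definition scale (c : R) (p : mpoly) : mpoly := map (fun t => (c * fst t, snd t)) p.

Lemma coef_scale c p w : coef (scale c p) w = c * coef p w.
Proof.
  unfold scale; rewrite !coef_as_sum, lsum_map, <- lsum_scal.
  apply lsum_ext; intros; simpl; lra.
Qed.

Lemma coef_pmul p q w : coef (pmul p q) w =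
  lsum p (fun t => lsum q (fun s => fst t * fst s * delta (vadd (snd t) (snd s)) w)).
Proof.
  unfold pmul. rewrite coef_as_sum, lsum_flat_map. apply lsum_ext; intros t _.
  rewrite lsum_map. apply lsum_ext; intros; simpl; auto.
Qed.

Lemma coef_neq0_in p w : coef p w <> 0 -> exists t, In t p /\ snd t = w.
Proof.
  rewrite coef_as_sum. intros H; apply lsum_neq0 in H as [t [Ht Hf]].
  exists t; split; auto. apply delta_neq0. intros E; rewrite E in Hf; lra.
Qed.

Lemma coef_abs_le p w : Rabs (coef p w) <= lsum p (fun t => Rabs (fst t)).
Proof.
  rewrite coef_as_sum. eapply Rle_trans; [apply lsum_abs|]. apply lsum_le; intros t _.
  rewrite Rabs_mult. unfold delta; destruct list_eq_dec.
  - rewrite Rabs_R1; lra.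
  - rewrite Rabs_R0. pose proof (Rabs_pos (fst t)); lra.
Qed.

Lemma lsum_delta_in (U : list mono) x G : NoDup U -> In x U ->
  lsum U (fun u => delta x u * G u) = G x.
Proof.
  induction U; intros Hn Hi; [destruct Hi|]. inversion Hn; subst.
  rewrite lsum_cons. unfold delta at 1. destruct (list_eq_dec Nat.eq_dec x a).
  - subst. rewrite (lsum_ext U _ (fun _ => 0)); [rewrite lsum_zero; lra|].
    intros b Hb. unfold delta. destruct (list_eq_dec Nat.eq_dec a b); [subst; contradiction|lra].
  - destruct Hi; [subst; congruence|]. rewrite IHU; auto; lra.
Qed.

Lemma lsum_delta_notin (U : list mono) x G : ~ In x U -> lsum U (fun u => delta x u * G u) = 0.
Proof.
  intros H. rewrite <- (lsum_zero U). apply lsum_ext; intros u Hu. unfold delta.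
  destruct (list_eq_dec Nat.eq_dec x u); [subst; contradiction|lra].
Qed.

Lemma lsum_terms_by_monomial p (U : list mono) H : NoDup U ->
  (forall t, In t p -> In (snd t) U) ->
  lsum p (fun t => fst t * H (snd t)) = lsum U (fun u => coef p u * H u).
Proof.
  intros Hn. induction p as [|t p IH]; intros Hin.
  - rewrite (lsum_ext U _ (fun _ => 0)); [rewrite lsum_zero; auto|]. intros; simpl; lra.
  - rewrite lsum_cons, IH by (intros; apply Hin; right; auto).
    rewrite (lsum_ext U (fun u => coef (t :: p) u * H u)
      (fun u => fst t * (delta (snd t) u * H u) + coef p u * H u)).
    + rewrite lsum_plus, lsum_scal, lsum_delta_in; auto. apply Hin; left; auto.
    + intros u _. destruct t as [c v]; simpl. unfold delta; simpl.
      destruct (list_eq_dec Nat.eq_dec v u); lra.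
Qed.

Definition supp (p : mpoly) : list mono := nodup (list_eq_dec Nat.eq_dec) (map snd p).

Lemma supp_nodup p : NoDup (supp p). Proof. apply NoDup_nodup. Qed.

Lemma supp_in p t : In t p -> In (snd t) (supp p).
Proof. intros; unfold supp; apply nodup_In, in_map; auto. Qed.

Lemma supp_app_l p q t : In t p -> In (snd t) (supp (p ++ q)).
Proof. intros; apply supp_in, in_or_app; auto. Qed.

Lemma supp_app_r p q t : In t q -> In (snd t) (supp (p ++ q)).
Proof. intros; apply supp_in, in_or_app; auto. Qed.

Lemma coef_neq0_supp p w : coef p w <> 0 -> In w (supp p).
Proof. intros H; apply coef_neq0_in in H as [t [Ht E]]; subst; apply supp_in; auto. Qed.

Lemma coef_pmul_supp p q U V w : NoDup U -> NoDup V ->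
  (forall t, In t p -> In (snd t) U) -> (forall t, In t q -> In (snd t) V) ->
  coef (pmul p q) w =
  lsum U (fun u => lsum V (fun u' => coef p u * coef q u' * delta (vadd u u') w)).
Proof.
  intros HU HV Hp Hq. rewrite coef_pmul.
  rewrite (lsum_ext p _
    (fun t => fst t * lsum q (fun s => fst s * delta (vadd (snd t) (snd s)) w))).
  2:{ intros; rewrite <- lsum_scal; apply lsum_ext; intros; lra. }
  rewrite (lsum_terms_by_monomial p U
    (fun u => lsum q (fun s => fst s * delta (vadd u (snd s)) w))); auto.
  apply lsum_ext; intros u _.
  rewrite (lsum_terms_by_monomial q V (fun u' => delta (vadd u u') w)); auto.
  rewrite <- lsum_scal; apply lsum_ext; intros; lra.
Qed.

Definition coef_eq (p q : mpoly) := forall w, coef p w = coef q w.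
Definition coef_le (p q : mpoly) := forall w, coef p w <= coef q w.

Lemma pmul_coef_eq_l p p' q : coef_eq p p' -> coef_eq (pmul p q) (pmul p' q).
Proof.
  intros H w. rewrite !(coef_pmul_supp _ _ (supp (p ++ p')) (supp q));
    auto using supp_nodup, supp_in, supp_app_l, supp_app_r.
  apply lsum_ext; intros; apply lsum_ext; intros; rewrite H; auto.
Qed.

Lemma pmul_coef_eq_r p q q' : coef_eq q q' -> coef_eq (pmul p q) (pmul p q').
Proof.
  intros H w. rewrite !(coef_pmul_supp _ _ (supp p) (supp (q ++ q')));
    auto using supp_nodup, supp_in, supp_app_l, supp_app_r.
  apply lsum_ext; intros; apply lsum_ext; intros; rewrite H; auto.
Qed.

Lemma pmul_nonneg p q : coef_le [] p -> coef_le [] q -> coef_le [] (pmul p q).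
Proof.
  intros Hp Hq w. simpl.
  rewrite (coef_pmul_supp _ _ (supp p) (supp q)); auto using supp_nodup, supp_in.
  apply lsum_nonneg; intros a _; apply lsum_nonneg; intros b _.
  specialize (Hp a); specialize (Hq b); pose proof (delta_nonneg (vadd a b) w); simpl in *.
  apply Rmult_le_pos; auto. apply Rmult_le_pos; auto.
Qed.

Lemma pmul_le_r r p q : coef_le [] r -> coef_le p q -> coef_le (pmul r p) (pmul r q).
Proof.
  intros Hr H w. rewrite !(coef_pmul_supp _ _ (supp r) (supp (p ++ q)));
    auto using supp_nodup, supp_in, supp_app_l, supp_app_r.
  apply lsum_le; intros a _; apply lsum_le; intros b _.
  specialize (Hr a); specialize (H b); pose proof (delta_nonneg (vadd a b) w); simpl in *.
  apply Rmult_le_compat_r; auto. apply Rmult_le_compat_l; auto.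
Qed.

Lemma vadd_comm u v : vadd u v = vadd v u.
Proof. revert v; induction u; destruct v; simpl; auto. rewrite IHu, Nat.add_comm; auto. Qed.

Lemma vadd_assoc u v x : vadd (vadd u v) x = vadd u (vadd v x).
Proof. revert v x; induction u; destruct v, x; simpl; auto. rewrite IHu, Nat.add_assoc; auto. Qed.

Lemma pmul_comm p q : coef_eq (pmul p q) (pmul q p).
Proof.
  intros w. rewrite !coef_pmul, lsum_swap. apply lsum_ext; intros; apply lsum_ext; intros.
  rewrite vadd_comm; lra.
Qed.

Lemma lsum_pmul p q F : lsum (pmul p q) F =
  lsum p (fun t => lsum q (fun s => F (fst t * fst s, vadd (snd t) (snd s)))).
Proof. unfold pmul; rewrite lsum_flat_map. apply lsum_ext; intros; rewrite lsum_map; auto. Qed.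

Lemma pmul_assoc p q r : coef_eq (pmul (pmul p q) r) (pmul p (pmul q r)).
Proof.
  intros w. rewrite !coef_pmul, lsum_pmul. apply lsum_ext; intros t _.
  rewrite (lsum_ext (pmul q r) _ (fun x => fst t * (fst x * delta (vadd (snd t) (snd x)) w)))
    by (intros; lra).
  rewrite lsum_scal, lsum_pmul, <- lsum_scal. apply lsum_ext; intros s _.
  rewrite <- lsum_scal. apply lsum_ext; intros; simpl. rewrite vadd_assoc; lra.
Qed.

Lemma pmul_app_l p q r : coef_eq (pmul (p ++ q) r) (pmul p r ++ pmul q r).
Proof. intros w; rewrite coef_app, !coef_pmul, lsum_app; auto. Qed.

Lemma pmul_app_r p q r : coef_eq (pmul r (p ++ q)) (pmul r p ++ pmul r q).
Proof.
  intros w; rewrite coef_app, !coef_pmul, <- lsum_plus.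
  apply lsum_ext; intros; rewrite lsum_app; auto.
Qed.

Lemma pmul_scale_l c p q : coef_eq (pmul (scale c p) q) (scale c (pmul p q)).
Proof.
  intros w; rewrite coef_scale, !coef_pmul. unfold scale; rewrite lsum_map, <- lsum_scal.
  apply lsum_ext; intros; rewrite <- lsum_scal; apply lsum_ext; intros; simpl; lra.
Qed.

Lemma pmul_scale_r c p q : coef_eq (pmul q (scale c p)) (scale c (pmul q p)).
Proof. intros w. rewrite pmul_comm, pmul_scale_l, !coef_scale, pmul_comm; auto. Qed.

Lemma pmul_le_l r p q : coef_le [] r -> coef_le p q -> coef_le (pmul p r) (pmul q r).
Proof. intros Hr H w. rewrite (pmul_comm p), (pmul_comm q). apply pmul_le_r; auto. Qed.

Lemma vadd_repeat0_l n u : length u = n -> vadd (repeat 0%nat n) u = u.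
Proof.
  revert u; induction n; destruct u; simpl; intros; auto; try discriminate. rewrite IHn; auto.
Qed.

Lemma pmul_pone_l n q : is_poly n q -> coef_eq (pmul (pone n) q) q.
Proof.
  intros Hq w. rewrite coef_pmul, coef_as_sum. unfold pone. rewrite lsum_cons. simpl.
  rewrite Rplus_0_r. apply lsum_ext; intros s Hs. rewrite vadd_repeat0_l; [lra|].
  unfold is_poly in Hq; rewrite Forall_forall in Hq; auto.
Qed.

Lemma pmul_pone_r n q : is_poly n q -> coef_eq (pmul q (pone n)) q.
Proof. intros Hq w. rewrite pmul_comm, pmul_pone_l; auto. Qed.

Lemma pone_nonneg n : coef_le [] (pone n).
Proof. intros w; simpl. destruct list_eq_dec; lra. Qed.

Lemma ppow_nonneg n p m : coef_le [] p -> coef_le [] (ppow n p m).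
Proof. intros H; induction m; simpl; [apply pone_nonneg | apply pmul_nonneg; auto]. Qed.

Lemma vadd_length u v : length u = length v -> length (vadd u v) = length u.
Proof. revert v; induction u; destruct v; simpl; intros; auto; discriminate. Qed.

Lemma is_poly_pmul n p q : is_poly n p -> is_poly n q -> is_poly n (pmul p q).
Proof.
  unfold is_poly, pmul; rewrite !Forall_forall; intros Hp Hq x Hx.
  apply in_flat_map in Hx as [t [Ht Hx]]. apply in_map_iff in Hx as [s [E Hs]]. subst; simpl.
  rewrite vadd_length; [apply Hp; auto|]. rewrite Hp, Hq; auto.
Qed.

Lemma is_poly_app n p q : is_poly n p -> is_poly n q -> is_poly n (p ++ q).
Proof. unfold is_poly; intros; apply Forall_app; auto. Qed.

Lemma is_poly_scale n c p : is_poly n p -> is_poly n (scale c p).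
Proof.
  unfold is_poly, scale; rewrite !Forall_forall; intros H x Hx.
  apply in_map_iff in Hx as [t [E Ht]]; subst; simpl; auto.
Qed.

Lemma is_poly_pone n : is_poly n (pone n).
Proof. unfold is_poly, pone. constructor; auto. simpl. apply repeat_length. Qed.

Lemma is_poly_ppow n p m : is_poly n p -> is_poly n (ppow n p m).
Proof. intros H; induction m; simpl; [apply is_poly_pone | apply is_poly_pmul; auto]. Qed.

Lemma is_poly_coef_length n p w : is_poly n p -> coef p w <> 0 -> length w = n.
Proof.
  intros Hp H. apply coef_neq0_in in H as [t [Ht E]]. subst.
  unfold is_poly in Hp; rewrite Forall_forall in Hp; auto.
Qed.

Lemma ppow_add n p a b : is_poly n p ->
  coef_eq (ppow n p (a + b)) (pmul (ppow n p a) (ppow n p b)).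
Proof.
  intros Hp; induction a; intros w.
  - change (ppow n p (0 + b)) with (ppow n p b). change (ppow n p 0) with (pone n).
    rewrite pmul_pone_l; auto. apply is_poly_ppow; auto.
  - change (ppow n p (S a + b)) with (pmul p (ppow n p (a + b))).
    change (ppow n p (S a)) with (pmul p (ppow n p a)).
    rewrite (pmul_coef_eq_r _ _ _ IHa), pmul_assoc; auto.
Qed.

Lemma ppow_mul n p K m : is_poly n p -> coef_eq (ppow n p (K * m)) (ppow n (ppow n p K) m).
Proof.
  intros Hp; induction m; intros w.
  - rewrite Nat.mul_0_r; auto.
  - replace (K * S m)%nat with (K + K * m)%nat by lia. rewrite ppow_add; auto. simpl.
    rewrite (pmul_coef_eq_r _ _ _ IHm); auto.
Qed.

Definition homog (n D : nat) (p : mpoly) :=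
  forall w, coef p w <> 0 -> length w = n /\ deg w = D.

Lemma homog_of_form n d p : is_form n d p -> homog n d p.
Proof. intros [Hp Hd] w H; split; auto. eapply is_poly_coef_length; eauto. Qed.

Lemma homog_coef_eq0 n D p w : homog n D p -> ~ (length w = n /\ deg w = D) -> coef p w = 0.
Proof. intros F H. destruct (Req_dec (coef p w) 0); auto. exfalso; apply H, F; auto. Qed.

Lemma shape_dec n D w : {length w = n /\ deg w = D} + {~ (length w = n /\ deg w = D)}.
Proof.
  destruct (Nat.eq_dec (length w) n), (Nat.eq_dec (deg w) D); [left; auto|right; tauto..].
Qed.

Lemma vadd_deg u v : length u = length v -> deg (vadd u v) = (deg u + deg v)%nat.
Proof.
  revert v; induction u; destruct v; simpl; intros; auto; try discriminate.
  rewrite IHu by lia. lia.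
Qed.

Lemma homog_pmul n a b p q : homog n a p -> homog n b q -> homog n (a + b) (pmul p q).
Proof.
  intros Hp Hq w H.
  rewrite (coef_pmul_supp _ _ (supp p) (supp q)) in H; auto using supp_nodup, supp_in.
  apply lsum_neq0 in H as [u [_ H]]. apply lsum_neq0 in H as [u' [_ H]].
  assert (coef p u <> 0) by (intro E; rewrite E in H; lra).
  assert (coef q u' <> 0) by (intro E; rewrite E in H; lra).
  assert (delta (vadd u u') w <> 0) by (intro E; rewrite E in H; lra).
  apply delta_neq0 in H2. subst. destruct (Hp _ H0), (Hq _ H1).
  rewrite vadd_length, vadd_deg; lia.
Qed.



Lemma deg_repeat0 k : deg (repeat 0%nat k) = 0%nat.
Proof. induction k; simpl; auto. Qed.

Lemma homog_pone n : homog n 0 (pone n).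
Proof.
  intros w H. apply coef_neq0_in in H as [t [[E|[]] E2]]. subst. simpl.
  rewrite repeat_length, deg_repeat0; auto.
Qed.

Lemma homog_ppow n d p m : homog n d p -> homog n (m * d) (ppow n p m).
Proof. intros H; induction m; simpl; [apply homog_pone | apply homog_pmul; auto]. Qed.

(** * Pólya's theorem *)

Fixpoint xsum (k : nat) : mpoly :=
  match k with
  | O => []
  | S k' => (1, 1%nat :: repeat 0%nat k') :: map (fun t => (fst t, 0%nat :: snd t)) (xsum k')
  end.

Definition xsum_pow n k := ppow n (xsum n) k.

Lemma is_poly_xsum k : is_poly k (xsum k).
Proof.
  unfold is_poly; rewrite Forall_forall. induction k; simpl; intros x Hx; [destruct Hx|].
  destruct Hx as [E|Hx]; [subst; simpl; rewrite repeat_length; auto|].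
  apply in_map_iff in Hx as [t [E Ht]]; subst; simpl; auto.
Qed.

Lemma xsum_term k t : In t (xsum k) -> deg (snd t) = 1%nat /\ fst t = 1.
Proof.
  revert t; induction k; intros t Ht; [destruct Ht|]. destruct Ht as [E|Ht].
  - subst; simpl. rewrite deg_repeat0; auto.
  - apply in_map_iff in Ht as [s [E Hs]]; subst. simpl. apply IHk; auto.
Qed.

Lemma homog_xsum n : homog n 1 (xsum n).
Proof.
  intros w H. apply coef_neq0_in in H as [t [Ht E]]. subst. split.
  - pose proof (is_poly_xsum n) as L; unfold is_poly in L; rewrite Forall_forall in L; auto.
  - apply (xsum_term _ _ Ht).
Qed.

Lemma xsum_nonneg n : coef_le [] (xsum n).
Proof.
  intros w. change (coef [] w) with 0. rewrite coef_as_sum. apply lsum_nonneg. intros t Ht.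
  destruct (xsum_term _ _ Ht) as [_ E]. rewrite E. pose proof (delta_nonneg (snd t) w). lra.
Qed.

Lemma homog_xsum_pow n k : homog n k (xsum_pow n k).
Proof. unfold xsum_pow. replace k with (k * 1)%nat at 1 by lia. apply homog_ppow, homog_xsum. Qed.

Lemma xsum_pow_nonneg n k : coef_le [] (xsum_pow n k).
Proof. apply ppow_nonneg, xsum_nonneg. Qed.

Lemma is_poly_xsum_pow n k : is_poly n (xsum_pow n k).
Proof. apply is_poly_ppow, is_poly_xsum. Qed.

Lemma xsum_pow_add n a b : coef_eq (xsum_pow n (a + b)) (pmul (xsum_pow n a) (xsum_pow n b)).
Proof. apply ppow_add, is_poly_xsum. Qed.

(* [dot u w] is only used for unit vectors [u], where it picks out a coordinate of [w]. *)
Fixpoint vle (u w : mono) : bool :=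
  match u, w with
  | a :: u', b :: w' => Nat.leb a b && vle u' w'
  | _, _ => true
  end.

Fixpoint vsub (w u : mono) : mono :=
  match w, u with
  | b :: w', a :: u' => (b - a)%nat :: vsub w' u'
  | _, _ => w
  end.

Fixpoint dot (u w : mono) : nat :=
  match u, w with
  | a :: u', b :: w' => (a * b + dot u' w')%nat
  | _, _ => 0%nat
  end.

Lemma vsub_length w u : length (vsub w u) = length w.
Proof. revert u; induction w; destruct u; simpl; auto. Qed.

Lemma vsub_repeat0 k b : length b = k -> vsub b (repeat 0%nat k) = b.
Proof.
  revert b; induction k; destruct b; simpl; intros; auto; try discriminate.
  rewrite IHk; auto. f_equal; lia.
Qed.

Lemma vle_repeat0 k b : vle (repeat 0%nat k) b = true.
Proof. revert b; induction k; destruct b; simpl; auto. Qed.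

Lemma dot_repeat0 k b : dot (repeat 0%nat k) b = 0%nat.
Proof. revert b; induction k; destruct b; simpl; auto. Qed.

Lemma vadd_eq_iff u v w : length u = length w -> length v = length w ->
  (vadd u v = w <-> (vle u w = true /\ v = vsub w u)).
Proof.
  revert v w; induction u; destruct v, w; simpl; intros; try discriminate; try tauto.
  rewrite Bool.andb_true_iff, Nat.leb_le. injection H; injection H0; intros.
  specialize (IHu v w H2 H1). split.
  - intros E; injection E; intros E1 E2. apply IHu in E1 as [E3 E4]. subst.
    split; [split; [lia|auto]|]. f_equal; lia.
  - intros [[E1 E2] E3]. injection E3; intros; subst. f_equal; [lia|]. apply IHu; auto.
Qed.

Lemma coef_pmul_by_vsub p q w : is_poly (length w) p -> is_poly (length w) q ->
  coef (pmul p q) w =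
  lsum p (fun t => fst t * (if vle (snd t) w then coef q (vsub w (snd t)) else 0)).
Proof.
  unfold is_poly; rewrite !Forall_forall; intros Hp Hq. rewrite coef_pmul.
  apply lsum_ext; intros t Ht. destruct (vle (snd t) w) eqn:Ev.
  - rewrite coef_as_sum, <- lsum_scal. apply lsum_ext; intros s Hs.
    unfold delta. destruct (list_eq_dec Nat.eq_dec (vadd (snd t) (snd s)) w) as [E|E];
    destruct (list_eq_dec Nat.eq_dec (snd s) (vsub w (snd t))) as [E'|E']; try lra.
    + apply vadd_eq_iff in E as [_ E]; auto; contradiction.
    + exfalso; apply E, vadd_eq_iff; auto.
  - rewrite Rmult_0_r, <- (lsum_zero q). apply lsum_ext; intros s Hs. unfold delta.
    destruct (list_eq_dec Nat.eq_dec (vadd (snd t) (snd s)) w) as [E|E]; try lra.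
    apply vadd_eq_iff in E as [E _]; auto; congruence.
Qed.

Fixpoint ffact (x k : nat) {struct k} : nat :=
  match k with
  | O => 1%nat
  | S k' => match x with O => 0%nat | S x' => (x * ffact x' k')%nat end
  end.

Fixpoint ffact_vec (b a : mono) : nat :=
  match b, a with
  | x :: b', k :: a' => (ffact x k * ffact_vec b' a')%nat
  | _, _ => 1%nat
  end.

Definition vfact (b : mono) : nat := fold_right (fun a acc => (fact a * acc)%nat) 1%nat b.

Lemma ffact_small x k : (x < k)%nat -> ffact x k = 0%nat.
Proof. revert k; induction x; destruct k; simpl; intros; try lia. rewrite IHx; lia. Qed.

Lemma ffact_neq0 x k : ffact x k <> 0%nat -> (k <= x)%nat.
Proof. intros H. destruct (le_lt_dec k x); auto. rewrite ffact_small in H; lia. Qed.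

Lemma ffact_diag x : ffact x x = fact x.
Proof. induction x; simpl; auto. Qed.

Lemma ffact_vec_deg_le b a : length b = length a -> ffact_vec b a <> 0%nat -> (deg a <= deg b)%nat.
Proof.
  revert a; induction b as [|x b IHb]; destruct a as [|y a]; simpl; intros; try lia.
  assert (ffact x y <> 0%nat) by (intro E; rewrite E in H0; lia).
  assert (ffact_vec b a <> 0%nat) by (intro E; rewrite E in H0; lia).
  apply ffact_neq0 in H1. specialize (IHb a ltac:(lia) H2). lia.
Qed.

Lemma ffact_vec_eq b a : length b = length a -> ffact_vec b a <> 0%nat -> deg a = deg b -> a = b.
Proof.
  revert a; induction b as [|x b IHb]; destruct a as [|y a]; simpl; intros;
    try lia; auto; try discriminate.
  assert (ffact x y <> 0%nat) by (intro E; rewrite E in H0; lia).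
  assert (ffact_vec b a <> 0%nat) by (intro E; rewrite E in H0; lia).
  apply ffact_neq0 in H2. pose proof (ffact_vec_deg_le b a ltac:(lia) H3).
  f_equal; [lia|]. apply IHb; auto; lia.
Qed.

Lemma ffact_vec_diag b : ffact_vec b b = vfact b.
Proof. induction b; simpl; auto. rewrite ffact_diag, IHb; auto. Qed.

Lemma ffact_vec_repeat0 b : ffact_vec b (repeat 0%nat (length b)) = 1%nat.
Proof. induction b; simpl; auto. lia. Qed.

Lemma ffact_shift b x :
  (if Nat.leb 1 b then INR b * INR (ffact (b - 1) x) else 0) = INR (ffact b x) * (INR b - INR x).
Proof.
  revert b; induction x; intros b.
  - destruct b; [simpl; lra|]. simpl. lra.
  - destruct b; [simpl; lra|].
    replace (Nat.leb 1 (S b)) with true by reflexivity. replace (S b - 1)%nat with b by lia.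
    cbn [ffact]. destruct b.
    + simpl. destruct x; simpl; lra.
    + specialize (IHx (S b)). replace (Nat.leb 1 (S b)) with true in IHx by reflexivity.
      replace (S b - 1)%nat with b in IHx by lia.
      rewrite !mult_INR, (S_INR (S b)), (S_INR x), IHx; ring.
Qed.

(* Euler's identity for falling powers: [sum_i b_i (b - e_i)^(a) = b^(a) (|b| - |a|)]. *)
Lemma lsum_xsum_ffact_vec k b a : length b = k -> length a = k ->
  lsum (xsum k) (fun t =>
    if vle (snd t) b then INR (dot (snd t) b) * INR (ffact_vec (vsub b (snd t)) a) else 0)
  = INR (ffact_vec b a) * (INR (deg b) - INR (deg a)).
Proof.
  revert b a; induction k; intros b a Hb Ha.
  - destruct b, a; simpl in *; try lia. unfold lsum; simpl. lra.
  - destruct b as [|x b]; try discriminate. destruct a as [|y a]; try discriminate.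
    simpl in Hb, Ha. injection Hb; injection Ha; intros Ha' Hb'.
    cbn [xsum]. rewrite lsum_cons, lsum_map. cbn [snd fst vle vsub dot ffact_vec].
    rewrite (lsum_ext _ _ (fun t => INR (ffact x y) * (if vle (snd t) b
      then INR (dot (snd t) b) * INR (ffact_vec (vsub b (snd t)) a) else 0))).
    2:{ intros t _. cbn [snd fst vle vsub dot ffact_vec]. change (Nat.leb 0 x) with true.
        cbn [andb]. rewrite Nat.sub_0_r. destruct t as [c u]; cbn [snd].
        destruct (vle u b); [|ring]. rewrite !mult_INR, Nat.mul_0_l, Nat.add_0_l. ring. }
    rewrite lsum_scal, IHk by auto. rewrite vle_repeat0, vsub_repeat0 by auto.
    rewrite Bool.andb_true_r.
    change (deg (x :: b)) with (x + deg b)%nat. change (deg (y :: a)) with (y + deg a)%nat.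
    rewrite (plus_INR x), (plus_INR y).
    assert (HH := ffact_shift x y).
    destruct (Nat.leb 1 x).
    + rewrite dot_repeat0, Nat.add_0_r, Nat.mul_1_l, !mult_INR.
      transitivity (INR (ffact_vec b a) * (INR x * INR (ffact (x - 1) y)) +
        INR (ffact x y) * (INR (ffact_vec b a) * (INR (deg b) - INR (deg a)))); [ring|].
      rewrite HH; ring.
    + rewrite mult_INR.
      transitivity (INR (ffact_vec b a) * 0 +
        INR (ffact x y) * (INR (ffact_vec b a) * (INR (deg b) - INR (deg a)))); [ring|].
      rewrite HH; ring.
Qed.

Lemma xsum_term_spec k t : In t (xsum k) -> fst t = 1 /\
  forall b, length b = k -> vle (snd t) b = true ->
    vfact b = (dot (snd t) b * vfact (vsub b (snd t)))%nat /\
    (deg (vsub b (snd t)) + 1 = deg b)%nat.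
Proof.
  revert t; induction k; intros t Ht; [destruct Ht|]. cbn [xsum] in Ht. destruct Ht as [E|Ht].
  - subst. split; auto. intros b Hb Hv. destruct b as [|x b]; [discriminate|].
    destruct x as [|x]; [discriminate|]. simpl in Hb.
    cbn [snd vsub]. rewrite vsub_repeat0 by lia. cbn [dot]. rewrite dot_repeat0.
    cbn [vfact fold_right deg]. replace (S x - 1)%nat with x by lia. fold (vfact b).
    split; simpl; lia.
  - apply in_map_iff in Ht as [s [E Hs]]. subst. destruct (IHk s Hs) as [H1 H2]. split; auto.
    intros b Hb Hv. destruct b as [|x b]; [discriminate|]. simpl in Hb, Hv.
    destruct (H2 b ltac:(lia) Hv) as [E1 E2]. cbn [snd vsub dot].
    rewrite Nat.sub_0_r. destruct s as [c u]; cbn [snd] in *. split.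
    + cbn [vfact fold_right]. fold (vfact b) (vfact (vsub b u)). rewrite E1. ring.
    + cbn [deg fold_right] in *. fold (deg (vsub b u)) (deg b). lia.
Qed.

Definition ffact_eval (g : mpoly) (b : mono) : R :=
  lsum (supp g) (fun u => coef g u * INR (ffact_vec b u)).

Lemma ffact_eval_homog n e g b : homog n e g -> length b = n -> deg b = e ->
  ffact_eval g b = coef g b * INR (vfact b).
Proof.
  intros Fg Hb Hd. unfold ffact_eval.
  rewrite (lsum_ext _ _ (fun u => delta b u * (coef g u * INR (vfact b)))).
  - destruct (in_dec (list_eq_dec Nat.eq_dec) b (supp g)).
    + rewrite lsum_delta_in; auto using supp_nodup.
    + rewrite lsum_delta_notin; auto. destruct (Req_dec (coef g b) 0) as [E|E].
      * rewrite E; lra.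
      * apply coef_neq0_supp in E; contradiction.
  - intros u Hu. destruct (Req_dec (coef g u) 0) as [E|E]; [rewrite E; lra|].
    destruct (Fg u E) as [Lu Du]. unfold delta. destruct (list_eq_dec Nat.eq_dec b u) as [Ebu|Nbu].
    + subst. rewrite ffact_vec_diag; lra.
    + destruct (Nat.eq_dec (ffact_vec b u) 0) as [Z|Z]; [rewrite Z; simpl; lra|].
      exfalso. apply Nbu. symmetry. apply ffact_vec_eq; auto; congruence.
Qed.

(* The identity behind Pólya's theorem; the induction step is Euler's identity. *)
Lemma coef_xsum_pow_mul n e g : is_poly n g -> homog n e g ->
  forall N b, length b = n -> deg b = (N + e)%nat ->
  coef (pmul (xsum_pow n N) g) b * INR (vfact b) = INR (fact N) * ffact_eval g b.
Proof.
  intros Hg Fg N. induction N; intros b Hb Hd.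
  - change (xsum_pow n 0) with (pone n). rewrite pmul_pone_l by auto.
    rewrite (ffact_eval_homog n e g b); auto. simpl; lra.
  - change (xsum_pow n (S N)) with (pmul (xsum n) (xsum_pow n N)).
    rewrite pmul_assoc, coef_pmul_by_vsub; rewrite ?Hb;
      [|apply is_poly_xsum|apply is_poly_pmul; auto; apply is_poly_xsum_pow].
    rewrite Rmult_comm, <- lsum_scal.
    rewrite (lsum_ext _ _ (fun t => if vle (snd t) b then INR (dot (snd t) b) *
        (INR (fact N) * ffact_eval g (vsub b (snd t))) else 0)).
    2:{ intros t Ht. destruct (xsum_term_spec _ _ Ht) as [H1 H2]. rewrite H1.
        destruct (vle (snd t) b) eqn:Ev; [|lra]. destruct (H2 b Hb Ev) as [E1 E2].
        rewrite <- IHN by (rewrite ?vsub_length; auto; lia). rewrite E1, mult_INR. ring. }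
    unfold ffact_eval.
    rewrite (lsum_ext _ _ (fun t => INR (fact N) * lsum (supp g) (fun u => coef g u *
        (if vle (snd t) b then INR (dot (snd t) b) * INR (ffact_vec (vsub b (snd t)) u) else 0)))).
    2:{ intros t _. destruct (vle (snd t) b); rewrite <- !lsum_scal.
        - apply lsum_ext; intros; ring.
        - symmetry. rewrite (lsum_ext _ _ (fun _ => 0)); [apply lsum_zero| intros; ring]. }
    rewrite lsum_scal, lsum_swap.
    rewrite (lsum_ext _ _ (fun u => INR (S N) * (coef g u * INR (ffact_vec b u)))).
    2:{ intros u _. rewrite lsum_scal. destruct (Req_dec (coef g u) 0) as [E|E]; [rewrite E; ring|].
        destruct (Fg u E) as [Lu Du]. rewrite lsum_xsum_ffact_vec, Hd, Du, plus_INR; auto. ring. }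
    rewrite lsum_scal, fact_simpl, mult_INR. ring.
Qed.

Lemma ffact_eval_pone n b : length b = n -> ffact_eval (pone n) b = 1.
Proof.
  intros Hb. unfold ffact_eval, supp, pone. simpl. unfold lsum; simpl.
  destruct list_eq_dec; [|congruence]. subst. rewrite ffact_vec_repeat0. simpl; ring.
Qed.

Lemma coef_xsum_pow n k b : length b = n -> deg b = k ->
  coef (xsum_pow n k) b * INR (vfact b) = INR (fact k).
Proof.
  intros Hb Hd.
  pose proof (coef_xsum_pow_mul n 0 (pone n) (is_poly_pone n) (homog_pone n) k b Hb
    ltac:(lia)) as H.
  rewrite pmul_pone_r, ffact_eval_pone in H by (auto using is_poly_xsum_pow). lra.
Qed.

Lemma fact_mul_le a b : (fact a * fact b <= fact (a + b))%nat.
Proof. induction a; simpl; [lia|]. nia. Qed.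

Lemma vfact_le b : (vfact b <= fact (deg b))%nat.
Proof.
  induction b; simpl; auto. fold (vfact b) (deg b).
  pose proof (fact_mul_le a (deg b)). nia.
Qed.

Lemma vfact_pos b : (1 <= vfact b)%nat.
Proof. induction b; simpl; auto. fold (vfact b). pose proof (lt_O_fact a). nia. Qed.

Lemma coef_xsum_pow_ge1 n k b : length b = n -> deg b = k -> 1 <= coef (xsum_pow n k) b.
Proof.
  intros Hb Hd. pose proof (coef_xsum_pow n k b Hb Hd) as H.
  pose proof (vfact_le b) as H1. pose proof (vfact_pos b) as H2. rewrite Hd in H1.
  apply le_INR in H1. apply le_INR in H2. simpl in H2.
  pose proof (xsum_pow_nonneg n k b). simpl in *. nra.
Qed.

Lemma coef_xsum_pow_le n k b : coef (xsum_pow n k) b <= INR (fact k).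
Proof.
  destruct (Req_dec (coef (xsum_pow n k) b) 0) as [E|E]; [rewrite E; apply pos_INR|].
  destruct (homog_xsum_pow n k b E) as [Hb Hd].
  pose proof (coef_xsum_pow n k b Hb Hd) as H. pose proof (vfact_pos b) as H2.
  apply le_INR in H2. simpl in H2. pose proof (xsum_pow_nonneg n k b). simpl in *. nra.
Qed.

(** * Forms positive on the orthant are bounded below on the simplex *)

Definition in_cube (x : list R) (k : nat) := length x = k /\ Forall (fun t => 0 <= t <= 1) x.

Fixpoint dist1 (x y : list R) : R :=
  match x, y with
  | a :: x', b :: y' => Rabs (a - b) + dist1 x' y'
  | _, _ => 0
  end.

Lemma dist1_refl x : dist1 x x = 0.
Proof. induction x; simpl; auto. rewrite IHx, Rminus_diag, Rabs_R0; lra. Qed.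

Lemma dist1_nonneg z z' : 0 <= dist1 z z'.
Proof.
  revert z'; induction z; destruct z'; simpl; try lra.
  pose proof (Rabs_pos (a - r)). specialize (IHz z'). lra.
Qed.

Definition clamp (a : R) := Rmax 0 (Rmin 1 a).

Lemma clamp_in a : 0 <= clamp a <= 1.
Proof. unfold clamp, Rmax, Rmin. repeat destruct Rle_dec; lra. Qed.

Lemma clamp_id a : 0 <= a <= 1 -> clamp a = a.
Proof. unfold clamp, Rmax, Rmin. intros. repeat destruct Rle_dec; lra. Qed.

Lemma clamp_lipschitz a b : Rabs (clamp a - clamp b) <= Rabs (a - b).
Proof. unfold clamp, Rmax, Rmin, Rabs. repeat destruct Rle_dec; repeat destruct Rcase_abs; lra. Qed.

Lemma in_cube_cons a y k : in_cube (a :: y) (S k) <-> (0 <= a <= 1 /\ in_cube y k).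
Proof.
  unfold in_cube; simpl. split.
  - intros [H1 H2]. inversion H2; subst. split; auto.
  - intros [H1 [H2 H3]]. split; auto.
Qed.

Lemma in_cube_clamp a y k : in_cube y k -> in_cube (clamp a :: y) (S k).
Proof. intros H. apply in_cube_cons. split; auto. apply clamp_in. Qed.

Lemma in_cube_repeat0 k : in_cube (repeat 0 k) k.
Proof.
  split; [apply repeat_length|]. apply Forall_forall. intros t Ht. apply repeat_spec in Ht. lra.
Qed.

Lemma inf_exists {A} (P : A -> Prop) (F : A -> R) y0 : P y0 -> (forall y, P y -> 0 < F y) ->
  {m : R | (forall y, P y -> m <= F y) /\ forall c, (forall y, P y -> c <= F y) -> c <= m}.
Proof.
  intros Hy0 Hpos.
  destruct (completeness (fun z => exists y, P y /\ z = - F y)) as [z [Hz1 Hz2]].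
  - exists 0. intros z [y [Hy ->]]. specialize (Hpos y Hy). lra.
  - exists (- F y0), y0. auto.
  - exists (- z). split.
    + intros y Hy. assert (- F y <= z) by (apply Hz1; exists y; auto). lra.
    + intros c Hc. assert (z <= - c); [|lra]. apply Hz2. intros w [y [Hy ->]].
      specialize (Hc y Hy). lra.
Qed.

Lemma lipschitz_continuity_pt (G : R -> R) L : 0 <= L ->
  (forall a b, G a <= G b + L * Rabs (a - b)) -> forall c, continuity_pt G c.
Proof.
  intros HL HG c eps Heps. exists (eps / (L + 1)). split; [apply Rdiv_lt_0_compat; lra|].
  intros x [_ Hx]. simpl in *. unfold R_dist in *.
  pose proof (HG x c). pose proof (HG c x). rewrite Rabs_minus_sym in H0.
  assert (L * Rabs (x - c) <= L * (eps / (L + 1))) by (apply Rmult_le_compat_l; lra).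
  assert (L * (eps / (L + 1)) < eps).
  { apply (Rmult_lt_reg_r (L + 1)); [lra|]. unfold Rdiv.
    rewrite Rmult_assoc, Rmult_assoc, Rinv_l, Rmult_1_r by lra. nra. }
  unfold Rabs at 1; destruct Rcase_abs; lra.
Qed.

(* Induction on the dimension: the minimum over the last [k] coordinates is a
   positive Lipschitz function of the first one, which attains its minimum on [0,1]. *)
Lemma cube_pos_lower_bound : forall k (F : list R -> R) L, 0 <= L ->
  (forall x y, in_cube x k -> in_cube y k -> Rabs (F x - F y) <= L * dist1 x y) ->
  (forall x, in_cube x k -> 0 < F x) ->
  exists m, 0 < m /\ forall x, in_cube x k -> m <= F x.
Proof.
  induction k; intros F L HL Hlip Hpos.
  - exists (F []). split; [apply Hpos; split; auto|].
    intros x [Hx _]. destruct x; [lra|discriminate].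
  - assert (Hslice : forall a y, in_cube y k -> 0 < F (clamp a :: y))
      by (intros; apply Hpos, in_cube_clamp; auto).
    set (G := fun a => proj1_sig (inf_exists (fun y => in_cube y k) (fun y => F (clamp a :: y))
      (repeat 0 k) (in_cube_repeat0 k) (Hslice a))).
    assert (G_le : forall a y, in_cube y k -> G a <= F (clamp a :: y))
      by (intros a; exact (proj1 (proj2_sig (inf_exists _ _ _ _ (Hslice a))))).
    assert (G_glb : forall a c, (forall y, in_cube y k -> c <= F (clamp a :: y)) -> c <= G a)
      by (intros a; exact (proj2 (proj2_sig (inf_exists _ _ _ _ (Hslice a))))).
    assert (G_lip : forall a b, G a <= G b + L * Rabs (a - b)).
    { intros a b. assert (G a - L * Rabs (a - b) <= G b); [|lra]. apply G_glb. intros y Hy.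
      specialize (G_le a y Hy).
      specialize (Hlip _ _ (in_cube_clamp a y k Hy) (in_cube_clamp b y k Hy)).
      simpl in Hlip. rewrite dist1_refl, Rplus_0_r in Hlip.
      pose proof (clamp_lipschitz a b). pose proof (Rle_abs (F (clamp a :: y) - F (clamp b :: y))).
      assert (L * Rabs (clamp a - clamp b) <= L * Rabs (a - b)) by (apply Rmult_le_compat_l; auto).
      lra. }
    assert (G_pos : forall a, 0 < G a).
    { intros a. destruct (IHk (fun y => F (clamp a :: y)) L HL) as [m [Hm Hm']].
      - intros x y Hx Hy.
        specialize (Hlip _ _ (in_cube_clamp a x k Hx) (in_cube_clamp a y k Hy)).
        simpl in Hlip. rewrite Rminus_diag, Rabs_R0, Rplus_0_l in Hlip. auto.
      - intros x Hx. apply Hslice; auto.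
      - assert (m <= G a); [apply G_glb; auto | lra]. }
    destruct (continuity_ab_min G 0 1 ltac:(lra)
      (fun c _ => lipschitz_continuity_pt G L HL G_lip c)) as [mx [Hmx _]].
    exists (G mx). split; auto. intros x Hx. destruct x as [|a y]; [destruct Hx; discriminate|].
    apply in_cube_cons in Hx as [Ha Hy]. specialize (Hmx a Ha). specialize (G_le a y Hy).
    rewrite clamp_id in G_le by auto. lra.
Qed.

Lemma pow_lipschitz a c B k : 0 <= a <= B -> 0 <= c <= B -> 1 <= B ->
  Rabs (a ^ k - c ^ k) <= INR k * B ^ k * Rabs (a - c).
Proof.
  intros Ha Hc HB. induction k.
  - simpl. rewrite Rminus_diag, Rabs_R0. lra.
  - replace (a ^ S k - c ^ S k) with (a * (a ^ k - c ^ k) + c ^ k * (a - c)) by (simpl; ring).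
    eapply Rle_trans; [apply Rabs_triang|]. rewrite !Rabs_mult.
    assert (Hck : 0 <= c ^ k <= B ^ k) by (split; [apply pow_le; lra|apply pow_incr; lra]).
    assert (HBk : B ^ k <= B * B ^ k) by nra.
    rewrite (Rabs_right a), (Rabs_right (c ^ k)) by lra.
    pose proof (Rabs_pos (a - c)). pose proof (Rabs_pos (a ^ k - c ^ k)). pose proof (pos_INR k).
    assert (a * Rabs (a ^ k - c ^ k) <= B * (INR k * B ^ k * Rabs (a - c)))
      by (apply Rmult_le_compat; lra).
    rewrite S_INR. simpl (B ^ S k).
    assert (c ^ k * Rabs (a - c) <= B ^ k * Rabs (a - c)) by (apply Rmult_le_compat_r; lra).
    assert (B ^ k * Rabs (a - c) <= B * B ^ k * Rabs (a - c)) by (apply Rmult_le_compat_r; lra).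
    nra.
Qed.

Definition in_box (B : R) (z : list R) := Forall (fun t => 0 <= t <= B) z.

Lemma meval_bound B z u : 1 <= B -> in_box B z -> 0 <= meval z u <= B ^ deg u.
Proof.
  intros HB. revert u; induction z as [|a z IH]; intros u Hz; destruct u as [|k u]; simpl.
  - lra.
  - split; [lra|]. apply pow_R1_Rle; lra.
  - lra.
  - inversion Hz; subst. specialize (IH u H2). fold (deg u). rewrite pow_add.
    assert (0 <= a ^ k <= B ^ k) by (split; [apply pow_le; lra|apply pow_incr; lra]).
    split; [apply Rmult_le_pos; lra|]. apply Rmult_le_compat; lra.
Qed.

Lemma meval_lipschitz B z z' u : 1 <= B -> in_box B z -> in_box B z' -> length z = length z' ->
  Rabs (meval z u - meval z' u) <= INR (deg u) * B ^ deg u * dist1 z z'.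
Proof.
  intros HB. revert z' u; induction z as [|a z IH]; intros z' u Hz Hz' Hl;
    destruct z' as [|a' z']; try discriminate; destruct u as [|k u]; simpl.
  - rewrite Rminus_diag, Rabs_R0; lra.
  - rewrite Rminus_diag, Rabs_R0. simpl. lra.
  - rewrite Rminus_diag, Rabs_R0. pose proof (Rabs_pos (a - a')). pose proof (dist1_nonneg z z').
    simpl; lra.
  - inversion Hz; inversion Hz'; subst. fold (deg u). simpl in Hl.
    specialize (IH z' u H2 H6 ltac:(lia)).
    pose proof (meval_bound B z u HB H2) as [X1 X2].
    pose proof (pow_lipschitz a a' B k H1 H5 HB) as P.
    replace (a ^ k * meval z u - a' ^ k * meval z' u) with
      ((a ^ k - a' ^ k) * meval z u + a' ^ k * (meval z u - meval z' u)) by ring.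
    eapply Rle_trans; [apply Rabs_triang|]. rewrite !Rabs_mult.
    assert (Ha' : 0 <= a' ^ k <= B ^ k) by (split; [apply pow_le; lra|apply pow_incr; lra]).
    rewrite (Rabs_right (meval z u)), (Rabs_right (a' ^ k)) by lra.
    pose proof (dist1_nonneg z z'). pose proof (Rabs_pos (a - a')).
    pose proof (Rabs_pos (a ^ k - a' ^ k)). pose proof (Rabs_pos (meval z u - meval z' u)).
    assert (Bk : 1 <= B ^ k) by (apply pow_R1_Rle; lra).
    assert (Bu : 1 <= B ^ deg u) by (apply pow_R1_Rle; lra).
    rewrite plus_INR, pow_add.
    assert (Rabs (a ^ k - a' ^ k) * meval z u <= INR k * B ^ k * Rabs (a - a') * B ^ deg u)
      by (apply Rmult_le_compat; lra).
    assert (a' ^ k * Rabs (meval z u - meval z' u) <=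
      B ^ k * (INR (deg u) * B ^ deg u * dist1 z z'))
      by (apply Rmult_le_compat; lra).
    pose proof (pos_INR k). pose proof (pos_INR (deg u)).
    assert (0 <= INR k * B ^ k * B ^ deg u * dist1 z z') by (repeat apply Rmult_le_pos; lra).
    assert (0 <= INR (deg u) * B ^ k * B ^ deg u * Rabs (a - a'))
      by (repeat apply Rmult_le_pos; lra).
    nra.
Qed.

Lemma peval_as_sum p x : peval p x = lsum p (fun t => fst t * meval x (snd t)).
Proof. induction p; simpl; auto. unfold peval in *; simpl. rewrite IHp; auto. Qed.

Lemma peval_supp g x : peval g x = lsum (supp g) (fun u => coef g u * meval x u).
Proof.
  rewrite peval_as_sum.
  apply (lsum_terms_by_monomial g (supp g) (fun u => meval x u)); auto using supp_nodup, supp_in.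
Qed.

Definition lip_const (B : R) (g : mpoly) :=
  lsum g (fun t => Rabs (fst t) * (INR (deg (snd t)) * B ^ deg (snd t))).

Lemma lip_const_nonneg B g : 0 <= B -> 0 <= lip_const B g.
Proof.
  intros HB. unfold lip_const. apply lsum_nonneg. intros t _. pose proof (Rabs_pos (fst t)).
  pose proof (pos_INR (deg (snd t))). pose proof (pow_le B (deg (snd t)) HB).
  apply Rmult_le_pos; auto. apply Rmult_le_pos; auto.
Qed.

Lemma peval_lipschitz B g z z' : 1 <= B -> in_box B z -> in_box B z' -> length z = length z' ->
  Rabs (peval g z - peval g z') <= lip_const B g * dist1 z z'.
Proof.
  intros HB Hz Hz' Hl. rewrite !peval_as_sum.
  replace (lsum g (fun t => fst t * meval z (snd t)) - lsum g (fun t => fst t * meval z' (snd t)))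
    with (lsum g (fun t => fst t * (meval z (snd t) - meval z' (snd t)))).
  2:{ rewrite (lsum_ext _ _ (fun t => fst t * meval z (snd t) + (-1) * (fst t * meval z' (snd t))))
        by (intros; ring).
      rewrite lsum_plus, lsum_scal; ring. }
  eapply Rle_trans; [apply lsum_abs|]. unfold lip_const. rewrite Rmult_comm, <- lsum_scal.
  apply lsum_le; intros t _. rewrite Rabs_mult.
  pose proof (meval_lipschitz B z z' (snd t) HB Hz Hz' Hl). pose proof (Rabs_pos (fst t)).
  assert (Rabs (fst t) * Rabs (meval z (snd t) - meval z' (snd t)) <=
    Rabs (fst t) * (INR (deg (snd t)) * B ^ deg (snd t) * dist1 z z'))
    by (apply Rmult_le_compat_l; auto).
  lra.
Qed.

Definition sumR (y : list R) := fold_right Rplus 0 y.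

(* [lift] maps the unit cube into the orthant minus the origin, fixing the points
   with coordinate sum at least 1; it is Lipschitz, so [g o lift] is too. *)
Definition lift_shift (y : list R) := Rmax 0 (1 - sumR y).
Definition lift (y : list R) := map (fun t => t + lift_shift y) y.

Lemma dist1_shift y y' c c' : length y = length y' ->
  dist1 (map (fun t => t + c) y) (map (fun t => t + c') y') <=
  dist1 y y' + INR (length y) * Rabs (c - c').
Proof.
  revert y'; induction y as [|a y IH]; destruct y' as [|a' y']; cbn [map dist1 length];
    intros; try discriminate; [simpl; lra|].
  specialize (IH y' ltac:(lia)). rewrite S_INR.
  replace (a + c - (a' + c')) with ((a - a') + (c - c')) by ring.
  pose proof (Rabs_triang (a - a') (c - c')). lra.
Qed.

Lemma sumR_dist y y' : length y = length y' -> Rabs (sumR y - sumR y') <= dist1 y y'.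
Proof.
  revert y'; induction y as [|a y IH]; destruct y' as [|a' y']; simpl; intros; try discriminate.
  - rewrite Rminus_diag, Rabs_R0; lra.
  - specialize (IH y' ltac:(lia)). unfold sumR in *; simpl.
    replace (a + fold_right Rplus 0 y - (a' + fold_right Rplus 0 y')) with
      ((a - a') + (fold_right Rplus 0 y - fold_right Rplus 0 y')) by ring.
    pose proof (Rabs_triang (a - a') (fold_right Rplus 0 y - fold_right Rplus 0 y')). lra.
Qed.

Lemma lift_shift_lipschitz y y' : Rabs (lift_shift y - lift_shift y') <= Rabs (sumR y - sumR y').
Proof. unfold lift_shift, Rmax, Rabs. repeat destruct Rle_dec; repeat destruct Rcase_abs; lra. Qed.

Lemma sumR_shift y c : sumR (map (fun t => t + c) y) = sumR y + INR (length y) * c.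
Proof.
  induction y; cbn [map length]; unfold sumR in *; cbn [fold_right]; [simpl; lra|].
  rewrite IHy, S_INR. ring.
Qed.

Lemma sumR_neq0 z : sumR z <> 0 -> exists t, In t z /\ t <> 0.
Proof.
  induction z; simpl; unfold sumR; simpl; intros H; [lra|].
  destruct (Req_dec a 0).
  - subst. destruct IHz as [t [H1 H2]]; [unfold sumR; lra|]. exists t; auto.
  - exists a; auto.
Qed.

Lemma in_cube_sumR_nonneg y k : in_cube y k -> 0 <= sumR y.
Proof. intros [_ H]. induction H; unfold sumR; simpl; [lra|]. unfold sumR in IHForall. lra. Qed.

Lemma lift_shift_bounds y k : in_cube y k -> 0 <= lift_shift y <= 1.
Proof.
  intros H. pose proof (in_cube_sumR_nonneg y k H). unfold lift_shift, Rmax. destruct Rle_dec; lra.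
Qed.

Lemma lift_in_box y k : in_cube y k -> in_box 2 (lift y).
Proof.
  intros H. pose proof (lift_shift_bounds y k H). destruct H as [_ H]. unfold in_box, lift.
  rewrite Forall_forall in *. intros t Ht. apply in_map_iff in Ht as [x [E Hx]]. subst.
  specialize (H x Hx). lra.
Qed.

Lemma lift_in_Rplus_nonzero n y : (1 <= n)%nat -> in_cube y n -> in_Rplus_nonzero n (lift y).
Proof.
  intros Hn H. pose proof (lift_in_box y n H) as Hb. pose proof (lift_shift_bounds y n H).
  pose proof (in_cube_sumR_nonneg y n H). destruct H as [Hl _]. split; [|split].
  - unfold lift; rewrite length_map; auto.
  - unfold in_box in Hb. rewrite Forall_forall in *. intros t Ht; specialize (Hb t Ht); lra.
  - apply sumR_neq0. unfold lift. rewrite sumR_shift, Hl.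
    assert (1 <= INR n) by (apply (le_INR 1); auto).
    unfold lift_shift in *. unfold Rmax in *. destruct Rle_dec; nra.
Qed.

Lemma lift_lipschitz y y' k : in_cube y k -> in_cube y' k ->
  dist1 (lift y) (lift y') <= (1 + INR k) * dist1 y y'.
Proof.
  intros [H1 _] [H2 _]. unfold lift. eapply Rle_trans; [apply dist1_shift; congruence|].
  pose proof (lift_shift_lipschitz y y'). pose proof (sumR_dist y y' ltac:(congruence)).
  rewrite H1. pose proof (pos_INR k). pose proof (dist1_nonneg y y').
  assert (INR k * Rabs (lift_shift y - lift_shift y') <= INR k * dist1 y y')
    by (apply Rmult_le_compat_l; lra).
  lra.
Qed.

Lemma lift_id y : 1 <= sumR y -> lift y = y.
Proof.
  intros H. unfold lift.
  replace (lift_shift y) with 0 by (unfold lift_shift, Rmax; destruct Rle_dec; lra).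
  rewrite <- map_id. apply map_ext. intros; ring.
Qed.

Lemma meval_scale c y u : length u = length y ->
  meval (map (fun v => c * v) y) u = c ^ deg u * meval y u.
Proof.
  revert u; induction y as [|a y IH]; destruct u as [|k u]; simpl; intros;
    try discriminate; [ring|].
  fold (deg u). rewrite IH, pow_add, Rpow_mult_distr by lia. ring.
Qed.

Lemma peval_scale n e g c y : homog n e g -> length y = n ->
  peval g (map (fun v => c * v) y) = c ^ e * peval g y.
Proof.
  intros Fg Hy. rewrite !peval_supp, <- lsum_scal. apply lsum_ext; intros u _.
  destruct (Req_dec (coef g u) 0) as [E|E]; [rewrite E; ring|].
  destruct (Fg u E) as [Lu Du]. rewrite meval_scale, Du by lia. ring.
Qed.

Lemma In_le_deg x b : In x b -> (x <= deg b)%nat.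
Proof.
  induction b; simpl; intros H; [destruct H|]. fold (deg b).
  destruct H; subst; [lia|]. specialize (IHb H); lia.
Qed.

Lemma sumR_div b t : sumR (map (fun x => INR x / t) b) = INR (deg b) / t.
Proof.
  induction b; unfold sumR in *; simpl; [unfold Rdiv; ring|]. fold (deg b).
  rewrite IHb, plus_INR. unfold Rdiv; ring.
Qed.

Lemma normalized_in_cube b : (1 <= deg b)%nat ->
  in_cube (map (fun x => INR x / INR (deg b)) b) (length b) /\
  sumR (map (fun x => INR x / INR (deg b)) b) = 1.
Proof.
  intros Hd. set (t := INR (deg b)). assert (Ht : 1 <= t) by (apply (le_INR 1); auto).
  split; [split|].
  - rewrite length_map; auto.
  - apply Forall_forall. intros z Hz.
    apply in_map_iff in Hz as [x [E Hx]]. subst. apply In_le_deg, le_INR in Hx.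
    fold t in Hx. pose proof (pos_INR x). split.
    + unfold Rdiv; apply Rmult_le_pos; [lra|apply Rlt_le, Rinv_0_lt_compat; lra].
    + apply (Rmult_le_reg_r t); [lra|]. unfold Rdiv. rewrite Rmult_assoc, Rinv_l by lra. lra.
  - rewrite sumR_div. fold t. field. lra.
Qed.

Lemma pos_form_cube_lower_bound n e g : (1 <= n)%nat -> homog n e g ->
  (forall x, in_Rplus_nonzero n x -> 0 < peval g x) ->
  exists m, 0 < m /\ forall y, in_cube y n -> m <= peval g (lift y).
Proof.
  intros Hn Fg Hpos.
  apply (cube_pos_lower_bound n (fun y => peval g (lift y)) (lip_const 2 g * (1 + INR n))).
  - apply Rmult_le_pos; [apply lip_const_nonneg; lra | pose proof (pos_INR n); lra].
  - intros y y' Hy Hy'. eapply Rle_trans.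
    + apply (peval_lipschitz 2); [lra|eapply lift_in_box; eauto|eapply lift_in_box; eauto|].
      unfold lift; rewrite !length_map. destruct Hy, Hy'; congruence.
    + rewrite Rmult_assoc. apply Rmult_le_compat_l; [apply lip_const_nonneg; lra|].
      apply lift_lipschitz; auto.
  - intros y Hy. apply Hpos, lift_in_Rplus_nonzero; auto.
Qed.

Lemma pos_form_lower_bound n e g : (1 <= n)%nat -> homog n e g ->
  (forall x, in_Rplus_nonzero n x -> 0 < peval g x) ->
  exists m, 0 < m /\ forall b, length b = n -> (1 <= deg b)%nat ->
    m * INR (deg b) ^ e <= peval g (map INR b).
Proof.
  intros Hn Fg Hpos. destruct (pos_form_cube_lower_bound n e g Hn Fg Hpos) as [m [Hm Hm']].
  exists m. split; auto. intros b Hb Hd.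
  set (t := INR (deg b)). assert (Ht : 1 <= t) by (apply (le_INR 1); auto).
  destruct (normalized_in_cube b Hd) as [Hy Hsum]. fold t in Hy, Hsum. rewrite Hb in Hy.
  specialize (Hm' _ Hy). rewrite lift_id in Hm' by lra.
  replace (map INR b) with (map (fun v => t * v) (map (fun x => INR x / t) b))
    by (rewrite map_map; apply map_ext; intros x; field; lra).
  rewrite (peval_scale n e g) by (auto; rewrite length_map; auto).
  pose proof (pow_le t e ltac:(lra)). nra.
Qed.

Fixpoint pow_vec (b a : mono) : nat :=
  match b, a with
  | x :: b', k :: a' => (x ^ k * pow_vec b' a')%nat
  | _, _ => 1%nat
  end.

Lemma ffact_succ x k : ffact x (S k) = (ffact x k * (x - k))%nat.
Proof.
  revert x; induction k; intros x.
  - destruct x; simpl; lia.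
  - destruct x; [simpl; lia|]. change (ffact (S x) (S (S k))) with (S x * ffact x (S k))%nat.
    rewrite IHk. change (ffact (S x) (S k)) with (S x * ffact x k)%nat.
    replace (S x - S k)%nat with (x - k)%nat by lia. lia.
Qed.

Lemma ffact_le_pow x k : (ffact x k <= x ^ k)%nat.
Proof.
  induction k; [simpl; auto|]. rewrite ffact_succ. cbn [Nat.pow].
  assert (ffact x k * (x - k) <= ffact x k * x)%nat by (apply Nat.mul_le_mono_l; lia). nia.
Qed.

Lemma pow_le_ffact x k : (x ^ k <= ffact x k + k * k * x ^ (k - 1))%nat.
Proof.
  induction k; [simpl; lia|]. rewrite ffact_succ. cbn [Nat.pow].
  replace (S k - 1)%nat with k by lia.
  pose proof (ffact_le_pow x k).
  assert (ffact x k * x <= ffact x k * (x - k) + k * x ^ k)%nat.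
  { destruct (le_lt_dec k x).
    - transitivity (ffact x k * (x - k + k))%nat; [rewrite Nat.sub_add by lia; lia|].
      rewrite Nat.mul_add_distr_l. nia.
    - rewrite ffact_small by lia. lia. }
  destruct k; [simpl in *; lia|].
  replace (S k - 1)%nat with k in IHk by lia.
  assert (x * x ^ k = x ^ S k)%nat by reflexivity. nia.
Qed.

Lemma ffact_vec_le_pow_vec b a : (ffact_vec b a <= pow_vec b a)%nat.
Proof.
  revert a; induction b as [|x b IH]; destruct a as [|k a]; simpl; auto.
  apply Nat.mul_le_mono; auto. apply ffact_le_pow.
Qed.

Lemma pow_vec_le b a : length b = length a -> (pow_vec b a <= deg b ^ deg a)%nat.
Proof.
  revert a; induction b as [|x b IHb]; destruct a as [|k a]; simpl; intros; auto; try discriminate.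
  fold (deg b) (deg a). rewrite Nat.pow_add_r. apply Nat.mul_le_mono.
  - apply Nat.pow_le_mono_l; lia.
  - eapply Nat.le_trans; [apply IHb; lia|]. apply Nat.pow_le_mono_l; lia.
Qed.

Lemma pow_vec_le_ffact_vec b a : length b = length a ->
  (pow_vec b a <= ffact_vec b a + deg a * deg a * deg b ^ (deg a - 1))%nat.
Proof.
  revert a; induction b as [|x b IH]; destruct a as [|k a]; simpl; intros Hl; try lia.
  fold (deg b) (deg a). specialize (IH a ltac:(lia)).
  pose proof (pow_vec_le b a ltac:(lia)) as Hpw. pose proof (ffact_vec_le_pow_vec b a) as Hq.
  pose proof (pow_le_ffact x k) as Hx.
  set (T := (x + deg b)%nat). set (e' := deg a) in *.
  set (P := pow_vec b a) in *. set (Q := ffact_vec b a) in *.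
  assert (A1 : (x ^ k * P <= x ^ k * Q + e' * e' * (x ^ k * deg b ^ (e' - 1)))%nat) by nia.
  assert (A2 : (x ^ k * Q <= ffact x k * Q + k * k * (x ^ (k - 1) * Q))%nat) by nia.
  assert (B1 : (e' * e' * (x ^ k * deg b ^ (e' - 1)) <= e' * e' * T ^ (k + e' - 1))%nat).
  { destruct e' as [|e'']; [lia|]. apply Nat.mul_le_mono_l.
    replace (k + S e'' - 1)%nat with (k + (S e'' - 1))%nat by lia. rewrite Nat.pow_add_r.
    apply Nat.mul_le_mono; apply Nat.pow_le_mono_l; unfold T; lia. }
  assert (B2 : (k * k * (x ^ (k - 1) * Q) <= k * k * T ^ (k + e' - 1))%nat).
  { destruct k as [|k']; [lia|]. apply Nat.mul_le_mono_l.
    replace (S k' + e' - 1)%nat with ((S k' - 1) + e')%nat by lia. rewrite Nat.pow_add_r.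
    apply Nat.mul_le_mono; [apply Nat.pow_le_mono_l; unfold T; lia|].
    eapply Nat.le_trans; [apply Hq|]. eapply Nat.le_trans; [apply Hpw|].
    apply Nat.pow_le_mono_l; unfold T; lia. }
  assert (C : ((e' * e' + k * k) * T ^ (k + e' - 1) <= (k + e') * (k + e') * T ^ (k + e' - 1))%nat)
    by (apply Nat.mul_le_mono_r; nia).
  nia.
Qed.

Lemma meval_INR b a : meval (map INR b) a = INR (pow_vec b a).
Proof.
  revert a; induction b as [|x b IHb]; destruct a as [|k a]; simpl; auto.
  rewrite mult_INR, pow_INR, IHb; auto.
Qed.

Definition abs_coef_sum g := lsum (supp g) (fun u => Rabs (coef g u)).

Lemma abs_coef_sum_nonneg g : 0 <= abs_coef_sum g.
Proof. unfold abs_coef_sum. apply lsum_nonneg; intros; apply Rabs_pos. Qed.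

Lemma ffact_eval_ge n e g b : homog n e g -> length b = n ->
  peval g (map INR b) - abs_coef_sum g * (INR (e * e) * INR (deg b) ^ (e - 1)) <= ffact_eval g b.
Proof.
  intros Fg Hb. rewrite peval_supp. unfold ffact_eval, abs_coef_sum.
  set (K := INR (e * e) * INR (deg b) ^ (e - 1)).
  assert (H : lsum (supp g) (fun u => coef g u * meval (map INR b) u + (- K) * Rabs (coef g u))
      <= lsum (supp g) (fun u => coef g u * INR (ffact_vec b u))).
  { apply lsum_le; intros u _. rewrite meval_INR.
    destruct (Req_dec (coef g u) 0) as [E|E]; [rewrite E, Rabs_R0; lra|].
    destruct (Fg u E) as [Lu Du].
    pose proof (pow_vec_le_ffact_vec b u ltac:(lia)) as H1.
    pose proof (ffact_vec_le_pow_vec b u) as H2.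
    rewrite Du in H1. apply le_INR in H1. apply le_INR in H2.
    rewrite plus_INR, !mult_INR, pow_INR in H1. unfold K. rewrite mult_INR.
    set (P := INR (pow_vec b u)) in *. set (Q := INR (ffact_vec b u)) in *.
    assert (coef g u * P - coef g u * Q <= Rabs (coef g u) * (P - Q)).
    { destruct (Rle_dec 0 (coef g u)).
      - rewrite Rabs_right by lra. lra.
      - rewrite Rabs_left by lra. nra. }
    assert (Rabs (coef g u) * (P - Q) <= Rabs (coef g u) * (INR e * INR e * INR (deg b) ^ (e - 1)))
      by (apply Rmult_le_compat_l; [apply Rabs_pos | lra]).
    lra. }
  rewrite lsum_plus, lsum_scal in H. lra.
Qed.

Lemma ffact_eval_lower_bound n e g : (1 <= n)%nat -> homog n e g ->
  (forall x, in_Rplus_nonzero n x -> 0 < peval g x) ->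
  exists m N1, 0 < m /\ forall b, length b = n -> (N1 <= deg b)%nat ->
    m * INR (deg b) ^ e <= ffact_eval g b.
Proof.
  intros Hn Fg Hpos. destruct (pos_form_lower_bound n e g Hn Fg Hpos) as [m [Hm Hlow]].
  set (C := abs_coef_sum g * INR (e * e)).
  assert (HC : 0 <= C) by (apply Rmult_le_pos; [apply abs_coef_sum_nonneg|apply pos_INR]).
  destruct (INR_unbounded (2 * C / m)) as [N1 HN1].
  exists (m / 2), (S N1). split; [lra|]. intros b Hb Hd.
  pose proof (ffact_eval_ge n e g b Fg Hb) as YC. pose proof (Hlow b Hb ltac:(lia)) as LW.
  set (t := INR (deg b)) in *.
  assert (Ht : INR N1 < t) by (apply lt_INR; lia).
  assert (C * t ^ (e - 1) <= m / 2 * t ^ e).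
  { destruct e as [|e'].
    - unfold C. simpl. lra.
    - replace (S e' - 1)%nat with e' by lia. simpl (t ^ S e').
      assert (C <= m / 2 * t).
      { assert (2 * C / m * m < t * m) by (apply Rmult_lt_compat_r; lra).
        unfold Rdiv in H. rewrite Rmult_assoc, Rinv_l, Rmult_1_r in H by lra. lra. }
      assert (0 <= t ^ e') by (apply pow_le, pos_INR). nra. }
  unfold C in H. rewrite Rmult_assoc in H. lra.
Qed.

Lemma fact_le_pow N e : (fact (N + e) <= fact N * (N + e) ^ e)%nat.
Proof.
  induction e; [rewrite Nat.add_0_r; simpl; lia|].
  replace (N + S e)%nat with (S (N + e)) by lia. rewrite fact_simpl. cbn [Nat.pow].
  assert ((N + e) ^ e <= S (N + e) ^ e)%nat by (apply Nat.pow_le_mono_l; lia).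
  eapply Nat.le_trans; [apply Nat.mul_le_mono_l; exact IHe|].
  replace (fact N * (S (N + e) * S (N + e) ^ e))%nat
    with (S (N + e) * (fact N * S (N + e) ^ e))%nat by ring.
  apply Nat.mul_le_mono_l, Nat.mul_le_mono_l; auto.
Qed.

Theorem polya n e g : (1 <= n)%nat -> is_poly n g -> homog n e g ->
  (forall x, in_Rplus_nonzero n x -> 0 < peval g x) ->
  exists N0 eps, 0 < eps /\ forall N, (N0 <= N)%nat ->
    coef_le (scale eps (xsum_pow n (N + e))) (pmul (xsum_pow n N) g).
Proof.
  intros Hn Pg Fg Hpos.
  destruct (ffact_eval_lower_bound n e g Hn Fg Hpos) as [m [N1 [Hm Hlow]]].
  exists N1, m. split; auto. intros N HN w. rewrite coef_scale.
  destruct (shape_dec n (N + e) w) as [[Hl Hd]|Hw].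
  2:{ rewrite (homog_coef_eq0 _ _ _ w (homog_xsum_pow n (N + e)) Hw).
      rewrite (homog_coef_eq0 _ _ _ w (homog_pmul _ _ _ _ _ (homog_xsum_pow n N) Fg) Hw). lra. }
  pose proof (coef_xsum_pow_mul n e g Pg Fg N w Hl Hd) as PF.
  pose proof (coef_xsum_pow n (N + e) w Hl Hd) as SF.
  specialize (Hlow w Hl ltac:(lia)). rewrite Hd in Hlow.
  pose proof (fact_le_pow N e) as FP. apply le_INR in FP. rewrite mult_INR, pow_INR in FP.
  pose proof (vfact_pos w) as FW. apply le_INR in FW. simpl in FW.
  assert (0 < INR (fact N)) by (apply lt_0_INR, lt_O_fact).
  apply (Rmult_le_reg_r (INR (vfact w))); [lra|].
  rewrite PF, Rmult_assoc, SF.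
  assert (INR (fact N) * (m * INR (N + e) ^ e) <= INR (fact N) * ffact_eval g w)
    by (apply Rmult_le_compat_l; lra).
  assert (m * INR (fact (N + e)) <= m * (INR (fact N) * INR (N + e) ^ e))
    by (apply Rmult_le_compat_l; lra).
  nra.
Qed.

(** * Powers of forms with positive coefficients *)

Lemma min_over_nat_le (P : nat -> R -> Prop) D :
  (forall a, (a <= D)%nat -> exists c, 0 < c /\ P a c) ->
  (forall a c c', P a c -> 0 < c' <= c -> P a c') ->
  exists c, 0 < c /\ forall a, (a <= D)%nat -> P a c.
Proof.
  intros H Hmono. induction D.
  - destruct (H 0%nat ltac:(lia)) as [c [Hc Pc]]. exists c; split; auto. intros a Ha.
    replace a with 0%nat by lia; auto.
  - destruct IHD as [c1 [Hc1 P1]]; [intros; apply H; lia|].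
    destruct (H (S D) ltac:(lia)) as [c2 [Hc2 P2]].
    assert (Hmin : 0 < Rmin c1 c2) by (apply Rmin_glb_lt; auto).
    exists (Rmin c1 c2). split; auto. intros a Ha.
    destruct (Nat.eq_dec a (S D)).
    + subst. apply (Hmono _ c2); auto. split; [lra | apply Rmin_r].
    + apply (Hmono _ c1); [apply P1; lia|]. split; [lra | apply Rmin_l].
Qed.

Lemma min_over_monomials : forall k D (F : mono -> R),
  (forall b, length b = k -> deg b = D -> 0 < F b) ->
  exists c, 0 < c /\ forall b, length b = k -> deg b = D -> c <= F b.
Proof.
  induction k; intros D F H.
  - destruct (Nat.eq_dec D 0).
    + exists (F []). split; [apply H; auto|]. intros b Hb Hd. destruct b; [lra|discriminate].
    + exists 1. split; [lra|]. intros b Hb Hd. destruct b; [simpl in Hd; lia|discriminate].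
  - destruct (min_over_nat_le
      (fun a c => forall b, length b = k -> deg b = (D - a)%nat -> c <= F (a :: b)) D)
      as [c [Hc Pc]].
    + intros a Ha. apply IHk. intros b Hb Hd. apply H; simpl; auto. fold (deg b). lia.
    + intros a c c' Hp Hc' b Hb Hd. specialize (Hp b Hb Hd). lra.
    + exists c. split; auto. intros b Hb Hd. destruct b as [|a b]; [discriminate|].
      simpl in Hd, Hb. fold (deg b) in Hd. apply Pc; lia.
Qed.

Lemma form_ge_xsum_pow n d f : homog n d f -> strictly_pos_coefs n d f ->
  exists c, 0 < c /\ coef_le (scale c (xsum_pow n d)) f.
Proof.
  intros Ff Hpos. destruct (min_over_monomials n d (coef f) Hpos) as [cf [Hcf Hmin]].
  assert (Hfact : 0 < INR (fact d)) by (apply lt_0_INR, lt_O_fact).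
  exists (cf / INR (fact d)). split; [apply Rdiv_lt_0_compat; lra|].
  intros w. rewrite coef_scale. destruct (shape_dec n d w) as [[H1 H2]|H].
  - specialize (Hmin w H1 H2). pose proof (coef_xsum_pow_le n d w).
    pose proof (xsum_pow_nonneg n d w). simpl in *.
    apply (Rmult_le_reg_l (INR (fact d))); auto.
    replace (INR (fact d) * (cf / INR (fact d) * coef (xsum_pow n d) w))
      with (cf * coef (xsum_pow n d) w) by (field; lra).
    nra.
  - rewrite (homog_coef_eq0 n d f w Ff H), (homog_coef_eq0 n d _ w (homog_xsum_pow n d) H). lra.
Qed.

Lemma coef_abs_le_xsum_pow n D p w : homog n D p ->
  Rabs (coef p w) <= lsum p (fun t => Rabs (fst t)) * coef (xsum_pow n D) w.
Proof.
  intros Fp. destruct (shape_dec n D w) as [[H1 H2]|H].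
  - pose proof (coef_xsum_pow_ge1 n D w H1 H2). pose proof (coef_abs_le p w).
    assert (0 <= lsum p (fun t => Rabs (fst t))) by (apply lsum_nonneg; intros; apply Rabs_pos).
    nra.
  - rewrite (homog_coef_eq0 n D p w Fp H), (homog_coef_eq0 n D _ w (homog_xsum_pow n D) H).
    rewrite Rabs_R0. lra.
Qed.

Lemma coef_le_ppow n p a k : 0 <= a -> coef_le [] p -> coef_le (scale a (xsum_pow n k)) p ->
  forall j, coef_le (scale (a ^ j) (xsum_pow n (j * k))) (ppow n p j).
Proof.
  intros Ha Hp H j. induction j; intros w.
  - rewrite coef_scale. simpl. rewrite Rmult_1_l. apply Rle_refl.
  - change (ppow n p (S j)) with (pmul p (ppow n p j)).
    rewrite coef_scale. cbn [Nat.mul]. rewrite xsum_pow_add.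
    eapply Rle_trans; [|apply (pmul_le_r p _ _ Hp IHj)].
    rewrite pmul_scale_r, coef_scale.
    pose proof (pmul_le_l (xsum_pow n (j * k)) _ _ (xsum_pow_nonneg n _) H w) as X.
    rewrite pmul_scale_l, coef_scale in X.
    pose proof (pow_le a j Ha). simpl (a ^ S j). nra.
Qed.

Section GeometricSum.

Variables (n : nat) (u v : mpoly).
Hypotheses (v_nonneg : coef_le [] v) (v_le_u : coef_le v u).

(* [geom_sum j = u^j + u^(j-1) v + ... + v^j]. *)
Fixpoint geom_sum (j : nat) : mpoly :=
  match j with
  | O => pone n
  | S j' => pmul u (geom_sum j') ++ ppow n v (S j')
  end.

Lemma u_nonneg : coef_le [] u.
Proof. intros w; eapply Rle_trans; [apply v_nonneg|apply v_le_u]. Qed.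

Lemma geom_sum_nonneg j : coef_le [] (geom_sum j).
Proof.
  induction j; cbn [geom_sum]; [apply pone_nonneg|]. intros w. rewrite coef_app.
  pose proof (pmul_nonneg _ _ u_nonneg IHj w). pose proof (ppow_nonneg n v (S j) v_nonneg w).
  simpl in *. lra.
Qed.

Lemma geom_sum_ge_pow_l j : coef_le (ppow n u j) (geom_sum j).
Proof.
  induction j; cbn [geom_sum]; intros w; [apply Rle_refl|]. rewrite coef_app.
  pose proof (pmul_le_r u _ _ u_nonneg IHj w). pose proof (ppow_nonneg n v (S j) v_nonneg w).
  change (ppow n u (S j)) with (pmul u (ppow n u j)). simpl in *. lra.
Qed.

Lemma geom_sum_ge_pow_r j : coef_le (scale (INR (S j)) (ppow n v j)) (geom_sum j).
Proof.
  induction j; cbn [geom_sum]; intros w.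
  - rewrite coef_scale. simpl. lra.
  - rewrite coef_app, coef_scale.
    pose proof (pmul_le_l _ _ _ (geom_sum_nonneg j) v_le_u w).
    pose proof (pmul_le_r v _ _ v_nonneg IHj w). rewrite pmul_scale_r, coef_scale in H0.
    change (ppow n v (S j)) with (pmul v (ppow n v j)). rewrite S_INR.
    rewrite (S_INR j) in *. lra.
Qed.

Lemma geom_sum_spec (s : mpoly) (c : R) : is_poly n u -> is_poly n v -> is_poly n s ->
  (forall w, coef u w = c * coef s w + coef v w) ->
  forall j, coef_eq (ppow n u (S j)) (scale c (pmul s (geom_sum j)) ++ ppow n v (S j)).
Proof.
  intros Pu Pv Ps Huv j. induction j; intros w.
  - change (ppow n u 1) with (pmul u (pone n)). change (ppow n v 1) with (pmul v (pone n)).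
    cbn [geom_sum]. rewrite coef_app, coef_scale, !pmul_pone_r; auto.
  - change (ppow n u (S (S j))) with (pmul u (ppow n u (S j))).
    change (ppow n v (S (S j))) with (pmul v (ppow n v (S j))). cbn [geom_sum].
    rewrite (pmul_coef_eq_r _ _ _ IHj), pmul_app_r, coef_app, pmul_scale_r, coef_scale.
    rewrite coef_app, coef_scale, pmul_app_r, coef_app.
    assert (E1 : coef (pmul u (pmul s (geom_sum j))) w = coef (pmul s (pmul u (geom_sum j))) w).
    { rewrite <- pmul_assoc, (pmul_coef_eq_l _ _ _ (pmul_comm u s)), pmul_assoc. auto. }
    assert (E2 : forall V, coef (pmul u V) w = c * coef (pmul s V) w + coef (pmul v V) w).
    { intros V. rewrite (pmul_coef_eq_l u (scale c s ++ v)).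
      - rewrite pmul_app_l, coef_app, pmul_scale_l, coef_scale; auto.
      - intros x; rewrite coef_app, coef_scale; auto. }
    rewrite E1, E2. ring.
Qed.

End GeometricSum.

Section Domination.

Variables (n D e : nat) (u g : mpoly) (c eps : R).
Hypotheses (Pu : is_poly n u) (Fu : homog n D u) (Fg : homog n e g) (c_pos : 0 < c).
Hypothesis u_ge : coef_le (scale c (xsum_pow n D)) u.
Hypothesis polya_mul : coef_le (scale eps (xsum_pow n (D + e))) (pmul (xsum_pow n D) g).

Let v := u ++ scale (- c) (xsum_pow n D).
Let X := xsum_pow n (D + e).
Let A := lsum u (fun t => Rabs (fst t)).
Let M := lsum g (fun t => Rabs (fst t)).

Lemma u_split w : coef u w = c * coef (xsum_pow n D) w + coef v w.
Proof. unfold v. rewrite coef_app, coef_scale. ring. Qed.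

Lemma v_nonneg : coef_le [] v.
Proof. intros w. specialize (u_ge w). rewrite coef_scale, u_split in u_ge. simpl. lra. Qed.

Lemma v_le_u : coef_le v u.
Proof. intros w. rewrite u_split. pose proof (xsum_pow_nonneg n D w). simpl in *. nra. Qed.

Lemma is_poly_v : is_poly n v.
Proof. apply is_poly_app, is_poly_scale, is_poly_xsum_pow; auto. Qed.

Lemma pow_mul_lower_bound j w :
  c * eps * coef (pmul (geom_sum n u v j) X) w - M * A * coef (pmul (ppow n v j) X) w <=
  coef (pmul (ppow n u (S j)) g) w.
Proof.
  set (Q := geom_sum n u v j). set (SD := xsum_pow n D).
  assert (Q_nonneg : coef_le [] Q) by apply (geom_sum_nonneg n u v v_nonneg v_le_u).
  assert (vj_nonneg : coef_le [] (ppow n v j)) by (apply ppow_nonneg, v_nonneg).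
  rewrite (pmul_coef_eq_l _ _ _ (geom_sum_spec n u v SD c Pu is_poly_v
    (is_poly_xsum_pow n D) u_split j)).
  rewrite pmul_app_l, coef_app, pmul_scale_l, coef_scale.
  assert (Hpos : eps * coef (pmul Q X) w <= coef (pmul (pmul SD Q) g) w).
  { rewrite (pmul_coef_eq_l _ _ _ (pmul_comm SD Q)), pmul_assoc.
    pose proof (pmul_le_r Q _ _ Q_nonneg polya_mul w) as H.
    rewrite pmul_scale_r, coef_scale in H. exact H. }
  assert (g_ge : coef_le (scale (- M) (xsum_pow n e)) g).
  { intros x. rewrite coef_scale. pose proof (coef_abs_le_xsum_pow n e g x Fg).
    pose proof (Rle_abs (- coef g x)). rewrite Rabs_Ropp in H0. fold M in H. lra. }
  assert (v_le : coef_le v (scale A SD)).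
  { intros x. rewrite coef_scale. pose proof (coef_abs_le_xsum_pow n D u x Fu).
    pose proof (v_le_u x). pose proof (Rle_abs (coef u x)). fold A SD in H. lra. }
  assert (Hneg : - (M * (A * coef (pmul (ppow n v j) X) w)) <= coef (pmul (ppow n v (S j)) g) w).
  { pose proof (pmul_le_r _ _ _ (ppow_nonneg n v (S j) v_nonneg) g_ge w) as H.
    rewrite pmul_scale_r, coef_scale in H.
    assert (E : coef (pmul (ppow n v (S j)) (xsum_pow n e)) w =
      coef (pmul (ppow n v j) (pmul v (xsum_pow n e))) w).
    { change (ppow n v (S j)) with (pmul v (ppow n v j)).
      rewrite (pmul_coef_eq_l _ _ _ (pmul_comm v (ppow n v j))), pmul_assoc. auto. }
    pose proof (pmul_le_r _ _ _ vj_nonneg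
      (pmul_le_l (xsum_pow n e) _ _ (xsum_pow_nonneg n e) v_le) w) as H'.
    rewrite (pmul_coef_eq_r _ _ _ (pmul_scale_l A SD (xsum_pow n e))),
      pmul_scale_r, coef_scale in H'.
    unfold SD in H'. rewrite <- (pmul_coef_eq_r _ _ _ (xsum_pow_add n D e)) in H'. fold X in H'.
    assert (0 <= M) by (apply lsum_nonneg; intros; apply Rabs_pos).
    rewrite E in H. assert (M * coef (pmul (ppow n v j) (pmul v (xsum_pow n e))) w <=
      M * (A * coef (pmul (ppow n v j) X) w)) by (apply Rmult_le_compat_l; auto).
    lra. }
  assert (c * (eps * coef (pmul Q X) w) <= c * coef (pmul (pmul SD Q) g) w)
    by (apply Rmult_le_compat_l; lra).
  fold Q. lra.
Qed.

Lemma dominated_pow_mul_pos : 0 < eps -> exists j, forall w, length w = n ->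
  deg w = (S j * D + e)%nat -> 0 < coef (pmul (ppow n u (S j)) g) w.
Proof.
  intros eps_pos.
  assert (HA : 0 <= A) by (apply lsum_nonneg; intros; apply Rabs_pos).
  assert (HM : 0 <= M) by (apply lsum_nonneg; intros; apply Rabs_pos).
  assert (Hce : 0 < c * eps) by (apply Rmult_lt_0_compat; lra).
  destruct (INR_unbounded (2 * M * A / (c * eps))) as [j Hj].
  assert (Hj' : M * A <= c * eps * INR (S j) / 2).
  { rewrite S_INR. apply (Rmult_lt_compat_r (c * eps)) in Hj; auto. unfold Rdiv in Hj.
    rewrite Rmult_assoc, Rinv_l, Rmult_1_r in Hj by lra. pose proof (pos_INR j). nra. }
  exists j. intros w Hw Hdw.
  pose proof (pow_mul_lower_bound j w) as Hlow.
  pose proof (geom_sum_ge_pow_l n u v v_nonneg v_le_u j) as Q_ge_u.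
  pose proof (geom_sum_ge_pow_r n u v v_nonneg v_le_u j) as Q_ge_v.
  pose proof (pmul_le_l X _ _ (xsum_pow_nonneg n _) Q_ge_u w) as QX_ge_uX.
  pose proof (pmul_le_l X _ _ (xsum_pow_nonneg n _) Q_ge_v w) as QX_ge_vX.
  rewrite pmul_scale_l, coef_scale in QX_ge_vX.
  pose proof (pmul_le_l X _ _ (xsum_pow_nonneg n _)
    (coef_le_ppow n u c D (Rlt_le _ _ c_pos) (u_nonneg u v v_nonneg v_le_u) u_ge j) w) as uX_ge.
  rewrite pmul_scale_l, coef_scale in uX_ge. unfold X in uX_ge. rewrite <- xsum_pow_add in uX_ge.
  pose proof (coef_xsum_pow_ge1 n (j * D + (D + e)) w Hw ltac:(rewrite Hdw; simpl; lia)) as coef_ge1.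
  pose proof (pmul_nonneg _ _ (ppow_nonneg n v j v_nonneg) (xsum_pow_nonneg n (D + e)) w) as vX_nonneg.
  simpl in vX_nonneg. fold X in vX_nonneg, uX_ge.
  set (q := coef (pmul (geom_sum n u v j) X) w) in *.
  set (b := coef (pmul (ppow n v j) X) w) in *.
  assert (Hcj : 0 < c ^ j) by (apply pow_lt; auto).
  assert (c ^ j <= q) by nra.
  assert (M * A * b <= c * eps * INR (S j) / 2 * b) by (apply Rmult_le_compat_r; lra).
  assert (c * eps * (INR (S j) * b) <= c * eps * q) by (apply Rmult_le_compat_l; lra).
  assert (0 < c * eps * c ^ j) by (apply Rmult_lt_0_compat; lra).
  assert (c * eps * c ^ j <= c * eps * q) by (apply Rmult_le_compat_l; lra).
  lra.
Qed.

End Domination.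

Theorem mainTheorem4 (n d e : nat) (f g : mpoly) :
  is_form n d f -> is_form n e g ->
  nonconstant f -> strictly_pos_coefs n d f ->
  (forall x : list R, in_Rplus_nonzero n x -> 0 < peval g x) ->
  exists l : nat, (1 <= l)%nat /\
    strictly_pos_coefs n (l * d + e) (pmul (ppow n f l) g).
Proof.
  intros Hf Hg Hnc Hfpos Hgpos.
  pose proof (homog_of_form _ _ _ Hf) as Ff. pose proof (homog_of_form _ _ _ Hg) as Fg.
  destruct Hf as [Pf _], Hg as [Pg _].
  destruct Hnc as [w0 [Hw0 Hdeg0]]. destruct (Ff w0 Hw0) as [Hlen0 Hd0].
  assert (Hn : (1 <= n)%nat) by (destruct w0; simpl in *; lia).
  destruct (form_ge_xsum_pow n d f Ff Hfpos) as [c [Hc Hf_ge]].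
  assert (f_nonneg : coef_le [] f).
  { intros w. pose proof (Hf_ge w). rewrite coef_scale in H.
    pose proof (xsum_pow_nonneg n d w). simpl in *. nra. }
  destruct (polya n e g Hn Pg Fg Hgpos) as [N0 [eps [Heps Hpolya]]].
  set (K := S N0).
  destruct (dominated_pow_mul_pos n (K * d) e (ppow n f K) g (c ^ K) eps
    (is_poly_ppow n f K Pf) (homog_ppow n d f K Ff) Fg (pow_lt c K Hc)
    (coef_le_ppow n f c d (Rlt_le _ _ Hc) f_nonneg Hf_ge K)
    (Hpolya (K * d)%nat ltac:(unfold K; nia)) Heps) as [j Hj].
  exists (K * S j)%nat. split; [unfold K; lia|]. intros w Hw Hdw.
  rewrite (pmul_coef_eq_l _ _ _ (ppow_mul n f K (S j) Pf)).
  apply Hj; auto. rewrite Hdw. lia.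
Qed.
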